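(* Let $f,g:\mathbb{C}\to\mathbb{C}$ be entire functions with $f\circ g=g\circ f$, and suppose that $f$ and $g$ satisfy Property A. Then the bungee set $BU(f)$ is completely invariant under $g$, and $BU(g)$ is completely invariant under $f$.
   Context: For an entire function $h$, $h^n$ denotes the $n$-th iterate. Escaping set: $I(h)=\{z: h^n(z)\to\infty\}$. Filled-in Julia set: $K(h)=\{z: (h^n(z))_n \text{ bounded}\}$. Bungee set: $BU(h)=\mathbb{C}\setminus(I(h)\cup K(h))$, i.e. the set of $z$ whose orbit $(h^n(z))$ has a bounded subsequence and also a subsequence tending to $\infty$. A set $A$ is completely invariant under $\phi$ if $\phi(A)\subseteq A$ and $\phi^{-1}(A)\subseteq A$. Property A for the pair $(f,g)$: for every $z\in\mathbb{C}$ and every strictly increasing sequence $(n_k)$ with $|f^{n_k}(z)|\to\infty$, one has $|g(f^{n_k}(z))|\to\infty$; and symmetrically with the roles of $f$ and $g$ exchanged. *)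

From Stdlib Require Import Reals.
From Coquelicot Require Import Coquelicot.
Open Scope R_scope.

Definition entire (h : C -> C) : Prop :=
  forall z : C, @ex_derive C_AbsRing C_NormedModule h z.

Fixpoint iter (n : nat) (h : C -> C) (z : C) : C :=
  match n with
  | O => z
  | S m => h (iter m h z)
  end.

Definition tends_to_infty (u : nat -> C) : Prop :=
  forall M : R, exists N : nat, forall n : nat, (N <= n)%nat -> M < Cmod (u n).

Definition escaping_set (h : C -> C) (z : C) : Prop :=
  tends_to_infty (fun n => iter n h z).

Definition filled_julia_set (h : C -> C) (z : C) : Prop :=
  exists M : R, forall n : nat, Cmod (iter n h z) <= M.

Definition bungee_set (h : C -> C) (z : C) : Prop :=
  ~ escaping_set h z /\ ~ filled_julia_set h z.

Definition completely_invariant (phi : C -> C) (A : C -> Prop) : Prop :=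
  (forall z, A z -> A (phi z)) /\ (forall z, A (phi z) -> A z).

Definition strictly_increasing (nk : nat -> nat) : Prop :=
  forall k, (nk k < nk (S k))%nat.

Definition property_A (f g : C -> C) : Prop :=
  (forall (z : C) (nk : nat -> nat), strictly_increasing nk ->
     tends_to_infty (fun k => iter (nk k) f z) ->
     tends_to_infty (fun k => g (iter (nk k) f z))) /\
  (forall (z : C) (nk : nat -> nat), strictly_increasing nk ->
     tends_to_infty (fun k => iter (nk k) g z) ->
     tends_to_infty (fun k => f (iter (nk k) g z))).

(* A bounded orbit stays bounded under a continuous g, and an escaping orbit keeps escaping
   under g by Property A.  Conversely, if the f-orbit of g z is bounded then so is the f-orbit
   of z, since otherwise Property A along an escaping subsequence would make the f-orbit of
   g z unbounded; and if the f-orbit of g z escapes, so does that of z, because g maps bounded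
   sets to bounded sets.  Since f^n (g z) = g (f^n z), these four facts make both I(f) and K(f),
   hence BU(f), completely invariant under g, and symmetrically for f and g exchanged. *)
From Stdlib Require Import Reals Lra Lia ClassicalEpsilon Classical.
From Coquelicot Require Import Coquelicot.
Open Scope R_scope.

Lemma list_upper_bound {A : Type} (h : A -> R) (l : list A) :
  exists B, forall t, List.In t l -> h t <= B.
Proof.
  induction l as [|a l [B HB]].
  - exists 0. intros t [].
  - exists (Rmax (h a) B). intros t [<-|Ht].
    + apply Rmax_l.
    + eapply Rle_trans; [apply HB, Ht|apply Rmax_r].
Qed.

Lemma entire_continuous (h : C -> C) : entire h -> forall z, continuous h z.
Proof.
  intros Hh z P HP. apply locally_C.
  exact (@ex_derive_continuous C_AbsRing C_NormedModule h z (Hh z) P HP).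
Qed.

Lemma continuous_locally_bounded (g : C -> C) (t : C) : continuous g t ->
  exists d : posreal, forall w : C, ball t d w -> Cmod (g w) <= Cmod (g t) + 1.
Proof.
  intro Hg.
  assert (Hnorm : filterlim (fun w => Cmod (g w)) (locally t) (locally (Cmod (g t)))).
  { eapply filterlim_comp; [exact Hg|apply (@filterlim_norm C_AbsRing C_NormedModule)]. }
  destruct (Hnorm _ (locally_ball (Cmod (g t)) (mkposreal 1 Rlt_0_1))) as [d Hd].
  exists d. intros w Hw. specialize (Hd w Hw).
  unfold ball in Hd; simpl in Hd. unfold AbsRing_ball, abs, minus, plus, opp in Hd; simpl in Hd.
  pose proof (Rle_abs (Cmod (g w) + - Cmod (g t))). lra.
Qed.

(* Heine-Borel: finitely many of the boxes from [continuous_locally_bounded] cover the square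
   [-M, M]^2, which contains the disk of radius M. *)
Lemma continuous_bounded_on_disk (g : C -> C) : (forall z, continuous g z) ->
  forall M, exists B, forall w : C, Cmod w <= M -> Cmod (g w) <= B.
Proof.
  intros Hg M.
  destruct (choice _ (fun t => continuous_locally_bounded g t (Hg t))) as [delta Hdelta].
  set (pt := fun x : Compactness.Tn 2 R => let '(x1, (x2, _)) := x in (x1, x2) : C).
  apply NNPP; intro Hunb.
  apply (compactness_list 2 (-M, (-M, tt)) (M, (M, tt)) (fun x => delta (pt x))).
  intros [l Hcover].
  destruct (list_upper_bound (fun x => Cmod (g (pt x)) + 1) l) as [B HB].
  apply Hunb; exists B; intros [w1 w2] Hw.
  assert (Hw1 : Rabs w1 <= M) by
    (pose proof (Rmax_Cmod (w1, w2)); pose proof (Rmax_l (Rabs w1) (Rabs w2)); simpl in *; lra).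
  assert (Hw2 : Rabs w2 <= M) by
    (pose proof (Rmax_Cmod (w1, w2)); pose proof (Rmax_r (Rabs w1) (Rabs w2)); simpl in *; lra).
  apply Rabs_le_between in Hw1, Hw2.
  destruct (Hcover (w1, (w2, tt))) as [[t1 [t2 []]] [Hin [_ [Hc1 [Hc2 _]]]]];
    [simpl; tauto|].
  eapply Rle_trans; [apply (Hdelta (t1, t2))|apply (HB _ Hin)].
  split; assumption.
Qed.

Lemma unbounded_beyond (u : nat -> C) :
  ~ (exists M, forall n, Cmod (u n) <= M) ->
  forall N M, exists n, (N <= n)%nat /\ M < Cmod (u n).
Proof.
  intros Hunb N M. apply NNPP; intro Htail. apply Hunb.
  destruct (list_upper_bound (fun n => Cmod (u n)) (List.seq 0 N)) as [B HB].
  exists (Rmax M B); intro n.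
  destruct (Nat.lt_ge_cases n N) as [Hn|Hn].
  - eapply Rle_trans; [apply HB, List.in_seq; lia|apply Rmax_r].
  - eapply Rle_trans; [|apply Rmax_l].
    apply Rnot_lt_le; intro Hbig. apply Htail. exists n; auto.
Qed.

Lemma escaping_subsequence (u : nat -> C) :
  (forall N M, exists n, (N <= n)%nat /\ M < Cmod (u n)) ->
  exists nk, strictly_increasing nk /\ tends_to_infty (fun k => u (nk k)).
Proof.
  intros Hunb.
  destruct (choice _ (fun Nk : nat * nat => Hunb (fst Nk) (INR (snd Nk)))) as [pick Hpick].
  set (nk := fix nk k := match k with O => pick (O, O) | S k' => pick (S (nk k'), S k') end).
  assert (Hlarge : forall k, INR k < Cmod (u (nk k)))
    by (intros [|k]; apply (Hpick (_, _))).
  exists nk; split.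
  - intro k. exact (proj1 (Hpick (S (nk k), S k))).
  - intro M. destruct (INR_unbounded M) as [N HN]. exists N; intros n Hn.
    apply le_INR in Hn. specialize (Hlarge n). lra.
Qed.

Lemma iter_comm (f g : C -> C) : (forall z, f (g z) = g (f z)) ->
  forall n z, iter n f (g z) = g (iter n f z).
Proof.
  intros Hfg n z; induction n as [|n IH]; simpl; [reflexivity|].
  rewrite IH; apply Hfg.
Qed.

Section Invariance.
Variables f g : C -> C.
Hypothesis g_cont : forall z, continuous g z.
Hypothesis fg_comm : forall z, f (g z) = g (f z).
Hypothesis property_A_f : forall (z : C) (nk : nat -> nat), strictly_increasing nk ->
  tends_to_infty (fun k => iter (nk k) f z) ->
  tends_to_infty (fun k => g (iter (nk k) f z)).

Lemma filled_julia_set_comp z : filled_julia_set f z -> filled_julia_set f (g z).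
Proof.
  intros [M HM]. destruct (continuous_bounded_on_disk g g_cont M) as [B HB].
  exists B; intro n. rewrite iter_comm by exact fg_comm. apply HB, HM.
Qed.

Lemma escaping_set_comp z : escaping_set f z -> escaping_set f (g z).
Proof.
  intros Hesc M.
  destruct (property_A_f z (fun k => k) (fun k => Nat.lt_succ_diag_r k) Hesc M) as [N HN].
  exists N; intros n Hn. rewrite iter_comm by exact fg_comm. apply HN, Hn.
Qed.

Lemma filled_julia_set_of_comp z : filled_julia_set f (g z) -> filled_julia_set f z.
Proof.
  intros [M HM]. apply NNPP; intro Hunb.
  destruct (escaping_subsequence _ (unbounded_beyond _ Hunb)) as [nk [Hinc Hesc]].
  destruct (property_A_f z nk Hinc Hesc M) as [N HN].
  specialize (HN N (le_n N)). specialize (HM (nk N)).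
  rewrite iter_comm in HM by exact fg_comm. lra.
Qed.

Lemma escaping_set_of_comp z : escaping_set f (g z) -> escaping_set f z.
Proof.
  intros Hesc M. destruct (continuous_bounded_on_disk g g_cont M) as [B HB].
  destruct (Hesc B) as [N HN]. exists N; intros n Hn.
  specialize (HN n Hn). rewrite iter_comm in HN by exact fg_comm.
  apply Rnot_le_lt; intro Hsmall. specialize (HB _ Hsmall). lra.
Qed.

Lemma bungee_set_completely_invariant : completely_invariant g (bungee_set f).
Proof.
  split; intros z [Hnesc Hnfilled]; split.
  - intro H; apply Hnesc, escaping_set_of_comp, H.
  - intro H; apply Hnfilled, filled_julia_set_of_comp, H.
  - intro H; apply Hnesc, escaping_set_comp, H.
  - intro H; apply Hnfilled, filled_julia_set_comp, H.
Qed.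

End Invariance.

Theorem mainTheorem3 (f g : C -> C) :
  entire f -> entire g ->
  (forall z : C, f (g z) = g (f z)) ->
  property_A f g ->
  completely_invariant g (bungee_set f) /\ completely_invariant f (bungee_set g).
Proof.
  intros Hf Hg Hfg [HAf HAg]. split.
  - apply bungee_set_completely_invariant; [apply entire_continuous, Hg|exact Hfg|exact HAf].
  - apply bungee_set_completely_invariant;
      [apply entire_continuous, Hf|intro z; symmetry; apply Hfg|exact HAg].
Qed.
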